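(* Let $(X,U,f)$ be a robot grid search problem. Then for all $x_I,x_I'\in X$ there exists a finite action sequence $\tilde u$ such that applying $\tilde u$ from $x_I$ and from $x_I'$ ends in the same state.
   Context: A robot grid search problem: $X\subset\mathbb{Z}\times\mathbb{Z}$ finite and connected (any two points are joined by a chain in $X$ with consecutive points at distance $1$), $U=\{(-1,0),(1,0),(0,1),(0,-1)\}$, $f(x,u)=x+u$ if $x+u\in X$ and $f(x,u)=x$ otherwise. Applying $\tilde u=(u_1,\ldots,u_K)$ from $x$ yields $f(\cdots f(f(x,u_1),u_2)\cdots,u_K)$. *)

From Stdlib Require Import ZArith List.
Import ListNotations.
Open Scope Z_scope.

Definition pt := (Z * Z)%type.

Definition U : list pt := [(-1, 0); (1, 0); (0, 1); (0, -1)].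

Definition padd (x u : pt) : pt := (fst x + fst u, snd x + snd u).

Definition pt_eq_dec : forall a b : pt, {a = b} + {a <> b}.
Proof. decide equality; apply Z.eq_dec. Defined.

(* Euclidean distance 1 between lattice points: exactly one coordinate
   differs, by exactly 1. *)
Definition adjacent (a b : pt) : Prop :=
  (Z.abs (fst a - fst b) + Z.abs (snd a - snd b) = 1).

Fixpoint chain (l : list pt) : Prop :=
  match l with
  | a :: ((b :: _) as t) => adjacent a b /\ chain t
  | _ => True
  end.

Definition connected (X : list pt) : Prop :=
  forall a b, In a X -> In b X ->
    exists l : list pt, (forall p, In p l -> In p X) /\ chain (a :: l ++ [b]).

Definition f (X : list pt) (x u : pt) : pt :=
  if in_dec pt_eq_dec (padd x u) X then padd x u else x.

Definition apply_seq (X : list pt) (x : pt) (us : list pt) : pt :=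
  fold_left (f X) us x.

(* Let e be a point of X that is not the midpoint of two distinct points of X,
   e.g. a point of maximal Euclidean norm.  Drive x_I to e along a path in X;
   meanwhile x_I' ends at some c.  Now let w be a path in X from c to e and apply
   it to both points: c arrives at e, while e follows w either unobstructed, which
   would put 2e - c in X and so forces c = e, or blocked at least once, in which
   case it reaches some c' by the strictly shorter list of moves it actually
   took.  Reversing these moves gives a path in X from c' back to e, so we conclude
   by induction on the length of w. *)

From Stdlib Require Import ZArith List Lia Wf_nat.
Import ListNotations.
Open Scope Z_scope.

Definition pneg (u : pt) : pt := (- fst u, - snd u).

Definition psub (b a : pt) : pt := (fst b - fst a, snd b - snd a).

Lemma padd_AC p u v : padd (padd p u) v = padd (padd p v) u.
Proof. destruct p, u, v; unfold padd; simpl; f_equal; ring. Qed.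

Lemma padd_pnegK p u : padd (padd p u) (pneg u) = p.
Proof. destruct p, u; unfold padd, pneg; simpl; f_equal; ring. Qed.

Lemma padd_psub a b : padd a (psub b a) = b.
Proof. destruct a, b; unfold padd, psub; simpl; f_equal; ring. Qed.

Lemma pneg_U u : In u U -> In (pneg u) U.
Proof. intros [<-|[<-|[<-|[<-|[]]]]]; simpl; auto. Qed.

Lemma adjacent_psub_U a b : adjacent a b -> In (psub b a) U.
Proof.
  destruct a as [a1 a2], b as [b1 b2]; unfold adjacent, psub, U; simpl; intros H.
  assert (C : (b1 - a1 = -1 /\ b2 - a2 = 0) \/ (b1 - a1 = 1 /\ b2 - a2 = 0) \/
              (b1 - a1 = 0 /\ b2 - a2 = 1) \/ (b1 - a1 = 0 /\ b2 - a2 = -1)) by lia.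
  destruct C as [[-> ->]|[[-> ->]|[[-> ->]|[-> ->]]]]; simpl; auto.
Qed.

Definition walk_end (p : pt) (ms : list pt) : pt := fold_left padd ms p.

Fixpoint walk_in (X : list pt) (p : pt) (ms : list pt) : Prop :=
  match ms with
  | [] => True
  | u :: ms' => In (padd p u) X /\ walk_in X (padd p u) ms'
  end.

Definition walk_rev (ms : list pt) : list pt := rev (map pneg ms).

Lemma walk_end_app p ms1 ms2 : walk_end p (ms1 ++ ms2) = walk_end (walk_end p ms1) ms2.
Proof. apply fold_left_app. Qed.

Lemma walk_end_padd ms : forall p v, walk_end (padd p v) ms = padd (walk_end p ms) v.
Proof.
  induction ms as [|u ms IH]; intros p v; [reflexivity|].
  unfold walk_end; simpl. rewrite padd_AC. apply IH.
Qed.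

Lemma walk_in_app X ms1 : forall p ms2,
  walk_in X p ms1 -> walk_in X (walk_end p ms1) ms2 -> walk_in X p (ms1 ++ ms2).
Proof.
  induction ms1 as [|u ms1 IH]; intros p ms2 H1 H2; [exact H2|].
  destruct H1. split; auto.
Qed.

Lemma walk_rev_U ms : incl ms U -> incl (walk_rev ms) U.
Proof.
  intros HU u Hu. apply in_rev, in_map_iff in Hu.
  destruct Hu as [v [<- Hv]]. apply pneg_U, HU, Hv.
Qed.

Lemma walk_end_rev p ms : walk_end (walk_end p ms) (walk_rev ms) = p.
Proof.
  revert p; induction ms as [|u ms IH]; intros p; [reflexivity|].
  unfold walk_rev; simpl. rewrite walk_end_app. fold (walk_rev ms).
  change (walk_end p (u :: ms)) with (walk_end (padd p u) ms).
  rewrite IH. apply padd_pnegK.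
Qed.

Lemma walk_in_rev X ms : forall p, In p X -> walk_in X p ms ->
  walk_in X (walk_end p ms) (walk_rev ms).
Proof.
  induction ms as [|u ms IH]; intros p Hp Hwalk; [exact I|].
  destruct Hwalk as [Hu Hms].
  change (walk_end p (u :: ms)) with (walk_end (padd p u) ms).
  unfold walk_rev; simpl. fold (walk_rev ms).
  apply walk_in_app; [now apply IH|].
  rewrite walk_end_rev. simpl. rewrite padd_pnegK. auto.
Qed.

Lemma walk_from_chain X b l : forall a, chain (a :: l ++ [b]) -> incl (l ++ [b]) X ->
  exists ms, incl ms U /\ walk_in X a ms /\ walk_end a ms = b.
Proof.
  induction l as [|c l IH]; intros a Hchain Hl.
  - destruct Hchain as [Hab _]. exists [psub b a].
    simpl walk_in. unfold walk_end; simpl. rewrite padd_psub. repeat split.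
    + intros u [<-|[]]. now apply adjacent_psub_U.
    + apply Hl. now left.
  - destruct Hchain as [Hac Hchain].
    destruct (IH c Hchain (proj2 (incl_cons_inv Hl))) as [ms [HU [Hwalk Hend]]].
    exists (psub c a :: ms). simpl walk_in. unfold walk_end; simpl.
    rewrite padd_psub. repeat split; auto.
    + apply incl_cons; [now apply adjacent_psub_U|exact HU].
    + apply Hl. now left.
Qed.

Lemma connected_walk X a b : connected X -> In a X -> In b X ->
  exists ms, incl ms U /\ walk_in X a ms /\ walk_end a ms = b.
Proof.
  intros HX Ha Hb. destruct (HX a b Ha Hb) as [l [Hl Hchain]].
  apply (walk_from_chain X b l a Hchain), incl_app; [exact Hl|].
  intros p [<-|[]]. exact Hb.
Qed.

Lemma apply_seq_app X p ms1 ms2 :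
  apply_seq X p (ms1 ++ ms2) = apply_seq X (apply_seq X p ms1) ms2.
Proof. apply fold_left_app. Qed.

Lemma apply_seq_in X ms : forall p, In p X -> In (apply_seq X p ms) X.
Proof.
  induction ms as [|u ms IH]; intros p Hp; [exact Hp|].
  apply IH. unfold f. destruct (in_dec pt_eq_dec (padd p u) X); auto.
Qed.

Lemma apply_seq_walk_in X ms : forall p, walk_in X p ms -> apply_seq X p ms = walk_end p ms.
Proof.
  induction ms as [|u ms IH]; intros p Hwalk; [reflexivity|].
  destruct Hwalk as [Hu Hms].
  unfold apply_seq; simpl. unfold f at 2.
  destruct (in_dec pt_eq_dec (padd p u) X); [|contradiction].
  now apply IH.
Qed.

Fixpoint taken_moves (X : list pt) (p : pt) (ms : list pt) : list pt :=
  match ms with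
  | [] => []
  | u :: ms' =>
      if in_dec pt_eq_dec (padd p u) X then u :: taken_moves X (padd p u) ms'
      else taken_moves X p ms'
  end.

Lemma taken_moves_spec X ms : forall p,
  walk_in X p (taken_moves X p ms) /\
  walk_end p (taken_moves X p ms) = apply_seq X p ms /\
  incl (taken_moves X p ms) ms /\
  (taken_moves X p ms = ms \/ (length (taken_moves X p ms) < length ms)%nat).
Proof.
  induction ms as [|u ms IH]; intros p.
  - repeat split; auto. apply incl_refl.
  - unfold apply_seq; simpl. unfold f at 2.
    destruct (in_dec pt_eq_dec (padd p u) X) as [Hin|Hout].
    + destruct (IH (padd p u)) as [Hwalk [Hend [Hincl Hlen]]].
      repeat split; auto.
      * now apply incl_cons; [left|apply incl_tl].
      * destruct Hlen as [->|Hlt]; [now left|right; simpl; lia].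
    + destruct (IH p) as [Hwalk [Hend [Hincl Hlen]]].
      repeat split; auto.
      * now apply incl_tl.
      * right. destruct Hlen as [->|Hlt]; simpl; lia.
Qed.

Definition synchronizable (X : list pt) (a b : pt) : Prop :=
  exists us, incl us U /\ apply_seq X a us = apply_seq X b us.

Lemma synchronizable_sym X a b : synchronizable X a b -> synchronizable X b a.
Proof. intros [us [HU E]]. now exists us. Qed.

Lemma synchronizable_after X a b ms : incl ms U ->
  synchronizable X (apply_seq X a ms) (apply_seq X b ms) -> synchronizable X a b.
Proof.
  intros HU [us [HUs E]]. exists (ms ++ us). split.
  - now apply incl_app.
  - now rewrite !apply_seq_app.
Qed.

Definition not_midpoint (X : list pt) (e : pt) : Prop :=
  forall c, In c X -> In (padd e (psub e c)) X -> c = e.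

Lemma sqnorm_max_not_midpoint X e :
  (forall c, In c X -> fst c * fst c + snd c * snd c <= fst e * fst e + snd e * snd e) ->
  not_midpoint X e.
Proof.
  intros Hmax c Hc Hc'.
  pose proof (Hmax c Hc) as Hle. pose proof (Hmax _ Hc') as Hle'. clear Hmax.
  destruct c as [c1 c2], e as [e1 e2]; unfold padd, psub in *; simpl in *.
  assert (Hd : (e1 - c1) * (e1 - c1) + (e2 - c2) * (e2 - c2) <= 0) by lia.
  pose proof (Z.square_nonneg (e1 - c1)). pose proof (Z.square_nonneg (e2 - c2)).
  f_equal; nia.
Qed.

Lemma list_argmax {A : Type} (g : A -> Z) (l : list A) :
  l <> [] -> exists x, In x l /\ forall y, In y l -> g y <= g x.
Proof.
  induction l as [|a l IH]; intros Hl; [congruence|].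
  destruct l as [|b l].
  - exists a. split; [now left|]. intros y [<-|[]]. lia.
  - destruct IH as [x [Hx Hmax]]; [discriminate|].
    destruct (Z_le_gt_dec (g a) (g x)).
    + exists x. split; [now right|]. intros y [<-|Hy]; auto.
    + exists a. split; [now left|]. intros y [<-|Hy]; [lia|].
      specialize (Hmax y Hy). lia.
Qed.

Lemma exists_not_midpoint X : X <> [] -> exists e, In e X /\ not_midpoint X e.
Proof.
  intros HX.
  destruct (list_argmax (fun c : pt => fst c * fst c + snd c * snd c) X HX)
    as [e [He Hmax]].
  exists e. split; [exact He|]. now apply sqnorm_max_not_midpoint.
Qed.

Section Merge.

Variables (X : list pt) (e : pt).
Hypotheses (He : In e X) (He_nm : not_midpoint X e).

Lemma synchronizable_not_midpoint n : forall c w, length w = n ->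
  In c X -> incl w U -> walk_in X c w -> walk_end c w = e -> synchronizable X e c.
Proof.
  induction n as [n IH] using lt_wf_ind.
  intros c w Hlen Hc HU Hwalk Hend.
  destruct (pt_eq_dec c e) as [->|Hne].
  { exists []. split; [intros u []|reflexivity]. }
  destruct (taken_moves_spec X w e) as [Ht_walk [Ht_end [Ht_incl Ht_len]]].
  set (t := taken_moves X e w) in *.
  destruct Ht_len as [Ht_full|Ht_short].
  - exfalso. apply Hne, He_nm; [exact Hc|].
    assert (Hmirror : walk_end e w = padd e (psub e c)).
    { rewrite <- (padd_psub c e) at 1. now rewrite walk_end_padd, Hend. }
    rewrite <- Hmirror, <- Ht_full, Ht_end. now apply apply_seq_in.
  - apply (synchronizable_after X e c w HU).
    rewrite (apply_seq_walk_in X w c Hwalk), Hend, <- Ht_end.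
    apply synchronizable_sym.
    apply (IH (length t) ltac:(lia) (walk_end e t) (walk_rev t)).
    + unfold walk_rev. now rewrite length_rev, length_map.
    + rewrite Ht_end. now apply apply_seq_in.
    + apply walk_rev_U. now apply incl_tran with w.
    + now apply walk_in_rev.
    + apply walk_end_rev.
Qed.

End Merge.

Theorem lemma2 (X : list pt) (HX : connected X) :
  forall xI xI' : pt, In xI X -> In xI' X ->
    exists us : list pt, (forall u, In u us -> In u U) /\
      apply_seq X xI us = apply_seq X xI' us.
Proof.
  intros xI xI' HI HI'.
  destruct (exists_not_midpoint X) as [e [He He_nm]]; [intros ->; destruct HI|].
  destruct (connected_walk X xI e HX HI He) as [ms [HU [Hwalk Hend]]].
  apply (synchronizable_after X xI xI' ms HU).
  rewrite (apply_seq_walk_in X ms xI Hwalk), Hend.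
  set (c := apply_seq X xI' ms).
  assert (Hc : In c X) by now apply apply_seq_in.
  destruct (connected_walk X c e HX Hc He) as [w [HUw [Hwalk_w Hend_w]]].
  exact (synchronizable_not_midpoint X e He He_nm _ c w eq_refl Hc HUw Hwalk_w Hend_w).
Qed.
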